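(* Let $I$ be an instance of the multicommodity flow feasibility problem: a directed graph $D=(V,A)$, capacities $u\in\mathbb{R}_+^A$, and commodities $K=\{1,\dots,k\}$, commodity $i$ having source $s_i\in V$, sink $t_i\in V$ and demand $d_i\ge0$. Construct the instance $I'$ of the robust path flow problem as follows: add a super source $s$ and super sink $t$; for each $i\in K$ add arcs $a_i=(s,s_i)$ and $z_i=(t_i,t)$ with $u_{a_i}=u_{z_i}=d_i$ and $c_{a_i}=c_{z_i}=i$; add an arc $e^*=(s,t)$ with $u_{e^*}=1$ and $c_{e^*}=k+1$; set $c_e=\infty$ for all $e\in A$ (original arcs keep capacities $u_e$); and set $B_I=\sum_{i\in K}i\,d_i$. Then there is a multicommodity flow in $D$ respecting the capacities $u$ and routing $d_i$ units from $s_i$ to $t_i$ for every $i\in K$ if and only if in $I'$ there is a feasible path flow $x$ with $\min_{z\in\Omega}\mathrm{val}(x,z)=1$.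
   Context: Robust path flow problem on a directed (multi)graph $D'=(V',A')$ with source $s$, sink $t$, capacities $u$, interdiction costs $c_e\in\mathbb{R}_+\cup\{\infty\}$ and interdictor budget $B_I$: $\mathcal{P}$ is the set of $s$-$t$-paths, the flow player picks $x\in X=\{x\in\mathbb{R}_+^{\mathcal{P}}:\sum_{P\ni e}x_P\le u_e\ \forall e\in A'\}$, the interdictor then picks $z\in\Omega=\{z\in\mathbb{R}_+^{A'\times\mathcal{P}}:\sum_{e\in A'}c_e\sum_{P\ni e}z_{e,P}\le B_I\}$ (with cost $\infty$ meaning flow cannot be stolen at that arc, i.e. $z_{e,P}=0$ whenever $c_e=\infty$), and $\mathrm{val}(x,z)=\sum_{P\in\mathcal{P}}(x_P-\sum_{e\in P}z_{e,P})^+$. The flow player's profit from $x$ is $\min_{z\in\Omega}\mathrm{val}(x,z)$. *)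

From HB Require Import structures.
From mathcomp Require Import all_boot all_order all_algebra.
From mathcomp Require Import reals.
Set Implicit Arguments. Unset Strict Implicit. Unset Printing Implicit Defensive.
Import Order.TTheory GRing.Theory Num.Theory.
Local Open Scope ring_scope.

Section Paths.
Variables (V A : finType) (tl hd : A -> V).

Fixpoint walkb (v : V) (p : seq A) (t : V) : bool :=
  match p with
  | [::] => v == t
  | e :: p' => (tl e == v) && walkb (hd e) p' t
  end.

Definition is_st_path (s t : V) (p : seq A) : bool :=
  walkb s p t && uniq (s :: map hd p).

Definition short_seqs (n : nat) : seq (seq A) :=
  flatten [seq [seq val tp | tp : m.-tuple A] | m <- iota 0 n].

(* the (finite) set of s-t paths, as a duplicate-free list
   (a simple path has fewer than #|V| arcs) *)
Definition stpaths (s t : V) : seq (seq A) :=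
  [seq p <- short_seqs #|V| | is_st_path s t p].
End Paths.

Section Robust.
Variables (R : realType) (V A : finType) (tl hd : A -> V) (s t : V).
Variables (u : A -> R) (c : A -> option R) (* None = infinite interdiction cost *)
          (BI : R).

Local Notation P := (stpaths tl hd s t).

(* x : R_+^P respecting capacities (values of x off P are irrelevant) *)
Definition feasible_pathflow (x : seq A -> R) : Prop :=
  (forall p, p \in P -> 0 <= x p) /\
  (forall e, \sum_(p <- P | e \in p) x p <= u e).

Definition in_Omega (z : A -> seq A -> R) : Prop :=
  (forall e p, p \in P -> 0 <= z e p) /\
  (forall e p, p \in P -> c e = None -> z e p = 0) /\
  \sum_(e : A) odflt 0 (c e) * \sum_(p <- P | e \in p) z e p <= BI.

Definition val (x : seq A -> R) (z : A -> seq A -> R) : R :=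
  \sum_(p <- P) Num.max 0 (x p - \sum_(e <- p) z e p).

Definition min_val_eq (x : seq A -> R) (v : R) : Prop :=
  (exists z, in_Omega z /\ val x z = v) /\
  (forall z, in_Omega z -> v <= val x z).
End Robust.

Definition mcf_feasible (R : realType) (V A : finType) (tl hd : A -> V)
  (u : A -> R) (k : nat) (src snk : 'I_k -> V) (d : 'I_k -> R) : Prop :=
  exists f : 'I_k -> seq A -> R,
    (forall i p, p \in stpaths tl hd (src i) (snk i) -> 0 <= f i p) /\
    (forall i, \sum_(p <- stpaths tl hd (src i) (snk i)) f i p = d i) /\
    (forall e, \sum_(i < k) \sum_(p <- stpaths tl hd (src i) (snk i) | e \in p) f i p
               <= u e).

(* vertices: inl v (original), inr true = super source s, inr false = super sink t *)
Definition Vp (V : finType) : finType := (V + bool)%type.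
(* arcs: inl e (original), inr (inl i) = a_i, inr (inr (inl i)) = z_i,
   inr (inr (inr tt)) = e* *)
Definition Ap (A : finType) (k : nat) : finType := (A + ('I_k + ('I_k + unit)))%type.

Section Reduction.
Variables (R : realType) (V A : finType) (tl hd : A -> V) (u : A -> R)
          (k : nat) (src snk : 'I_k -> V) (d : 'I_k -> R).

Definition sS : Vp V := inr true.
Definition tT : Vp V := inr false.

Definition tlp (e : Ap A k) : Vp V :=
  match e with
  | inl a => inl (tl a)
  | inr (inl i) => sS
  | inr (inr (inl i)) => inl (snk i)
  | inr (inr (inr _)) => sS
  end.

Definition hdp (e : Ap A k) : Vp V :=
  match e with
  | inl a => inl (hd a)
  | inr (inl i) => inl (src i)
  | inr (inr (inl i)) => tT
  | inr (inr (inr _)) => tT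
  end.

Definition up (e : Ap A k) : R :=
  match e with
  | inl a => u a
  | inr (inl i) => d i
  | inr (inr (inl i)) => d i
  | inr (inr (inr _)) => 1
  end.

(* commodity i : 'I_k is the paper's commodity i+1 *)
Definition cp (e : Ap A k) : option R :=
  match e with
  | inl a => None
  | inr (inl i) => Some (i.+1)%:R
  | inr (inr (inl i)) => Some (i.+1)%:R
  | inr (inr (inr _)) => Some (k.+1)%:R
  end.

Definition BIp : R := \sum_(i < k) (i.+1)%:R * d i.
End Reduction.

From Pilot Require Import Defs.
From HB Require Import structures.
From mathcomp Require Import all_boot all_order all_algebra.
From mathcomp Require Import reals.
From mathcomp Require Import lra.
Set Implicit Arguments. Unset Strict Implicit. Unset Printing Implicit Defensive.
Import Order.TTheory GRing.Theory Num.Theory.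
Local Open Scope ring_scope.

(* Every s-t path of I' is either e* or a_i p z_j for an s_i-t_j path p of D.
   Removing a unit of flow from the latter costs at least min(i,j), the price
   of its cheaper end arc, while e* costs k+1.  Weighting each unit of flow by
   that price, a feasible x has total weight at most B_I = sum_i i d_i,
   because the arcs a_i carry at most d_i.
   If x is a multicommodity flow plus one unit on e*, its weight is exactly
   B_I, and since k+1 exceeds every other price, budget spent on e* leaves at
   least as much flow elsewhere: the value is 1.
   Conversely, stealing each path at its cheaper end and spending the rest of
   the budget on e* shows that value 1 forces weight B_I; as the arcs a_i and
   z_j bound the row and column sums of the s_i-t_j flow matrix by d, this
   forces a diagonal matrix with row sums d_i, i.e. a multicommodity flow. *)

Lemma uniq_flatten_disjoint (T I : eqType) (s : seq I) (F : I -> seq T) :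
  uniq s -> (forall i, uniq (F i)) ->
  (forall i j x, x \in F i -> x \in F j -> i = j) ->
  uniq (flatten (map F s)).
Proof.
move=> us uF dF; elim: s us => [|i s IH] //= /andP[nis us].
rewrite cat_uniq uF IH // andbT; apply/hasPn => x /flatten_mapP[j js xj].
by apply/negP => xi; rewrite (dF _ _ _ xi xj) js in nis.
Qed.

Section StPaths.
Variables (V A : finType) (tl hd : A -> V).

Lemma mem_short_seqs n p : (p \in short_seqs A n) = (size p < n)%N.
Proof.
apply/flatten_mapP/idP => [[m]|sp].
  by rewrite mem_iota add0n => /andP[_ mn] /mapP[tp _ ->]; rewrite size_tuple.
exists (size p); first by rewrite mem_iota add0n sp.
by apply/mapP; exists (in_tuple p); rewrite ?mem_enum.
Qed.

Lemma short_seqs_uniq n : uniq (short_seqs A n).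
Proof.
apply: uniq_flatten_disjoint => [|m|i j x].
- exact: iota_uniq.
- by rewrite map_inj_uniq ?enum_uniq //; apply: val_inj.
- by move=> /mapP[t1 _ ->] /mapP[t2 _ e]; rewrite -(size_tuple t1) e size_tuple.
Qed.

Lemma st_path_size s t p : is_st_path tl hd s t p -> (size p < #|V|)%N.
Proof.
case/andP=> _ /card_uniqP /= card_p.
by have := max_card (mem (s :: map hd p)); rewrite card_p /= size_map.
Qed.

Lemma mem_stpaths s t p : (p \in stpaths tl hd s t) = is_st_path tl hd s t p.
Proof.
by rewrite mem_filter mem_short_seqs andb_idr //; apply: st_path_size.
Qed.

Lemma stpaths_uniq s t : uniq (stpaths tl hd s t).
Proof. by rewrite filter_uniq // short_seqs_uniq. Qed.

Lemma uniq_stpath s t p : p \in stpaths tl hd s t -> uniq p.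
Proof. by rewrite mem_stpaths => /andP[_ /= /andP[_ /map_uniq]]. Qed.

End StPaths.

Section Interdiction.
Variables (R : realType) (V A : finType) (tl hd : A -> V) (s t : V)
          (c : A -> option R) (BI : R).
Local Notation P := (stpaths tl hd s t).

Definition stolen (z : A -> seq A -> R) (p : seq A) : R := \sum_(e <- p) z e p.

Lemma val_stolen (x : seq A -> R) (z : A -> seq A -> R) :
  Defs.val tl hd s t x z = \sum_(p <- P) Num.max 0 (x p - stolen z p).
Proof. by []. Qed.

Definition interdiction_cost (z : A -> seq A -> R) (p : seq A) : R :=
  \sum_(e <- p) odflt 0 (c e) * z e p.

Lemma budget_by_paths (z : A -> seq A -> R) :
  \sum_(e : A) odflt 0 (c e) * \sum_(p <- P | e \in p) z e p =
  \sum_(p <- P) interdiction_cost z p.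
Proof.
under eq_bigr => e _ do rewrite mulr_sumr big_mkcond.
rewrite exchange_big /=; apply: eq_big_seq => p Pp.
rewrite /interdiction_cost (big_uniq _ (uniq_stpath Pp)) [RHS]big_mkcond /=.
by apply: eq_bigr => e _; case: (e \in p).
Qed.

Lemma in_Omega_cost (z : A -> seq A -> R) :
  in_Omega tl hd s t c BI z -> \sum_(p <- P) interdiction_cost z p <= BI.
Proof. by case=> _ [_]; rewrite budget_by_paths. Qed.

End Interdiction.

Section WeightedSums.
Variable R : realFieldType.

Lemma ler_sum_eq (I : finType) (F G : I -> R) :
  (forall i, F i <= G i) -> \sum_i G i <= \sum_i F i -> forall i, F i = G i.
Proof.
move=> FG GF i; apply/eqP; rewrite eq_sym -subr_eq0; apply/eqP.
have GF0 j : 0 <= G j - F j by rewrite subr_ge0.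
apply: (@psumr_eq0P _ _ predT _ (fun j _ => GF0 j)) => //.
by apply/eqP; rewrite eq_le sumrB subr_le0 subr_ge0 GF ler_sum.
Qed.

Lemma sum_diag_le (k : nat) (F : 'I_k -> 'I_k -> R) : (forall i j, 0 <= F i j) ->
  \sum_i F i i <= \sum_i \sum_j F i j.
Proof.
move=> F0; apply: ler_sum => i _; rewrite (bigD1 i) //= lerDl.
by apply: sumr_ge0.
Qed.

Lemma stolen_le_pos_part (T : Type) (r : seq T) (w x y : T -> R) (W s0 : R) :
  0 < W -> (forall p, 0 <= w p <= W) ->
  W * s0 + \sum_(p <- r) w p * y p <= \sum_(p <- r) w p * x p ->
  s0 <= \sum_(p <- r) Num.max 0 (x p - y p).
Proof.
move=> W0 w0W budget; rewrite -(ler_pM2l W0) mulr_sumr.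
have gap : W * s0 <= \sum_(p <- r) w p * (x p - y p).
  under eq_bigr => p _ do rewrite mulrBr.
  rewrite sumrB; lra.
apply: le_trans gap _; apply: ler_sum => p _.
have /andP[w0 wW] := w0W p.
have max_ge : x p - y p <= Num.max 0 (x p - y p) by rewrite le_max lexx orbT.
apply: le_trans (ler_wpM2l w0 max_ge) (ler_wpM2r _ wW).
by rewrite le_max lexx.
Qed.

(* Row i weighs X i j by min(i,j)+1 <= i+1, so reaching the bound forces
   full rows and zeros below the diagonal. *)
Lemma rows_tight (k : nat) (X : 'I_k -> 'I_k -> R) (D : 'I_k -> R) :
  (forall i j, 0 <= X i j) -> (forall i, \sum_(j < k) X i j <= D i) ->
  \sum_(i < k) (i.+1)%:R * D i <=
    \sum_(i < k) \sum_(j < k) (minn i j).+1%:R * X i j ->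
  (forall i, \sum_(j < k) X i j = D i) /\
  (forall i j : 'I_k, (j < i)%N -> X i j = 0).
Proof.
move=> X0 rowX tight.
have weight_le (i j : 'I_k) : (minn i j).+1%:R * X i j <= (i.+1)%:R * X i j.
  by rewrite ler_wpM2r // ler_nat ltnS geq_minl.
have row_le (i : 'I_k) :
    \sum_(j < k) (minn i j).+1%:R * X i j <= (i.+1)%:R * \sum_(j < k) X i j.
  by rewrite mulr_sumr; apply: ler_sum => j _.
have rowD_le (i : 'I_k) : (i.+1)%:R * \sum_(j < k) X i j <= (i.+1)%:R * D i.
  by rewrite ler_wpM2l.
have rowE := ler_sum_eq (fun i => le_trans (row_le i) (rowD_le i)) tight.
have rowXE (i : 'I_k) : (i.+1)%:R * \sum_(j < k) X i j = (i.+1)%:R * D i.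
  by apply/eqP; rewrite eq_le rowD_le -rowE row_le.
split=> [i | i j ji]; first by apply: mulfI (rowXE i); rewrite pnatr_eq0.
have /(_ j) : forall j : 'I_k, (minn i j).+1%:R * X i j = (i.+1)%:R * X i j.
  by apply: ler_sum_eq => // ; rewrite -mulr_sumr rowXE -rowE.
move/eqP; rewrite -subr_eq0 -mulrBl mulf_eq0 subr_eq0 eqr_nat eqSS => /orP[|/eqP//].
by move/eqP/minn_idPl; rewrite leqNgt ji.
Qed.

Lemma diag_tight (k : nat) (X : 'I_k -> 'I_k -> R) (D : 'I_k -> R) :
  (forall i j, 0 <= X i j) -> (forall i, \sum_(j < k) X i j <= D i) ->
  (forall j, \sum_(i < k) X i j <= D j) ->
  \sum_(i < k) (i.+1)%:R * D i <=
    \sum_(i < k) \sum_(j < k) (minn i j).+1%:R * X i j ->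
  forall i, X i i = D i.
Proof.
move=> X0 rowX colX tight.
have [rowE lower0] := rows_tight X0 rowX tight.
have tightT : \sum_(i < k) (i.+1)%:R * D i <=
               \sum_(i < k) \sum_(j < k) (minn i j).+1%:R * X j i.
  rewrite exchange_big /=; apply: le_trans tight _.
  by apply: ler_sum => i _; apply: ler_sum => j _; rewrite minnC.
have [_ upper0] := rows_tight (X := fun i j => X j i) (fun i j => X0 j i) colX tightT.
move=> i; rewrite -rowE (big_only1 i) // => j ne _.
by case: (ltngtP i j) => [/upper0|/lower0|/val_inj ij] //; rewrite ij eqxx in ne.
Qed.

End WeightedSums.

Section Reduction.
Variables (R : realType) (V A : finType) (tl hd : A -> V) (u : A -> R)
          (k : nat) (src snk : 'I_k -> V) (d : 'I_k -> R).

Local Notation A' := (Ap A k).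
Local Notation V' := (Vp V).
Local Notation tl' := (tlp tl snk).
Local Notation hd' := (hdp hd src).
Local Notation P' := (stpaths tl' hd' (sS V) (tT V)).
Local Notation S i j := (stpaths tl hd (src i) (snk j)).
Local Notation Omega := (in_Omega tl' hd' (sS V) (tT V) (@cp R A k) (BIp d)).
Local Notation cost := (interdiction_cost (@cp R A k)).

Definition orig (a : A) : A' := inl a.
Definition sarc (i : 'I_k) : A' := inr (inl i).
Definition tarc (j : 'I_k) : A' := inr (inr (inl j)).
Definition estar : A' := inr (inr (inr tt)).

Definition lift_path (i j : 'I_k) (p : seq A) : seq A' :=
  sarc i :: map orig p ++ [:: tarc j].

Definition unlift (P : seq A') : seq A :=
  pmap (fun e : A' => if e is inl a then Some a else None) P.

Definition path_src (P : seq A') : option 'I_k :=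
  if P is inr (inl i) :: _ then Some i else None.

Definition path_snk (P : seq A') : option 'I_k :=
  if last estar P is inr (inr (inl j)) then Some j else None.

Lemma lift_pathK i j : cancel (lift_path i j) unlift.
Proof.
by move=> p; rewrite /unlift /lift_path /= pmap_cat cats0; elim: p => //= a p ->.
Qed.

Lemma path_src_lift i j p : path_src (lift_path i j p) = Some i.
Proof. by []. Qed.

Lemma path_snk_lift i j p : path_snk (lift_path i j p) = Some j.
Proof. by rewrite /path_snk /lift_path /= last_cat. Qed.

Lemma lift_path_neq_estar i j p : (lift_path i j p == [:: estar]) = false.
Proof. by apply/eqP => /(congr1 size); rewrite /= size_cat addn1. Qed.

Lemma walk_lift v j p :
  walkb tl' hd' (inl v) (map orig p ++ [:: tarc j]) (tT V) = walkb tl hd v p (snk j).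
Proof.
elim: p v => [|a p IH] v /=; last by rewrite IH.
by rewrite eqxx andbT eq_sym.
Qed.

Lemma is_st_path_lift i j p :
  is_st_path tl' hd' (sS V) (tT V) (lift_path i j p) =
  is_st_path tl hd (src i) (snk j) p.
Proof.
rewrite /is_st_path /lift_path /= walk_lift; congr (_ && _).
have inl_inj : injective (inl : V -> V') by move=> x y [].
have inr_notin b (L : seq V) : (inr b \in (map inl L : seq V')) = false.
  by apply/mapP => -[].
have inl_neq_inr (x : V) b : (inl x == inr b :> V') = false by [].
have -> : map hd' (map orig p ++ [:: tarc j]) = map inl (map hd p) ++ [:: tT V].
  by rewrite map_cat -!map_comp.
rewrite !inE !mem_cat !inr_notin cat_uniq map_inj_uniq // mem_map //=.
by rewrite mem_seq1 /tT inr_notin inl_neq_inr /= andbT orbF.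
Qed.

Lemma walk_from_tT r : walkb tl' hd' (tT V) r (tT V) -> r = [::].
Proof. by case: r => [|[a|[i|[j|[]]]] r]. Qed.

Lemma walk_to_tT v r : walkb tl' hd' (inl v) r (tT V) ->
  exists j p, r = map orig p ++ [:: tarc j].
Proof.
elim: r v => [|[a|[i|[j|[]]]] r IH] v //= /andP[_ w].
- by have [j [p ->]] := IH _ w; exists j, (a :: p).
- by rewrite (walk_from_tT w); exists j, [::].
Qed.

Lemma stpath_cases P : P \in P' ->
  P = [:: estar] \/ exists i j p, p \in S i j /\ P = lift_path i j p.
Proof.
rewrite mem_stpaths; case: P => [|[a|[i|[j|[]]]] r] //; last first.
  by case/andP=> /andP[_ /walk_from_tT ->]; left.
move=> Pr; right; have /andP[/andP[_ /walk_to_tT[j [p r_eq]]] _] := Pr.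
exists i, j, p; rewrite mem_stpaths -is_st_path_lift /lift_path -r_eq.
by split.
Qed.

Lemma estar_stpath : [:: estar] \in P'.
Proof. by rewrite mem_stpaths. Qed.

Lemma lift_stpath i j p : p \in S i j -> lift_path i j p \in P'.
Proof. by rewrite !mem_stpaths is_st_path_lift. Qed.

Definition lifted_paths : seq (seq A') :=
  flatten [seq map (lift_path ij.1 ij.2) (S ij.1 ij.2) | ij <- enum {: 'I_k * 'I_k}].

Lemma mem_lifted_paths P :
  (P \in lifted_paths) =
  [exists ij : 'I_k * 'I_k, P \in map (lift_path ij.1 ij.2) (S ij.1 ij.2)].
Proof.
by apply/flatten_mapP/existsP => [[ij _ h]|[ij h]]; exists ij; rewrite ?mem_enum.
Qed.

Lemma lifted_path_stpath P : P \in lifted_paths -> P \in P'.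
Proof.
by rewrite mem_lifted_paths => /existsP[ij /mapP[p Sp ->]]; apply: lift_stpath.
Qed.

Lemma perm_stpaths : perm_eq P' ([:: estar] :: lifted_paths).
Proof.
apply: uniq_perm; first exact: stpaths_uniq.
  rewrite /= mem_lifted_paths negb_exists; apply/andP; split.
    by apply/forallP => ij; apply/mapP => -[p _].
  apply: uniq_flatten_disjoint => [|ij|[i j] [i' j'] P /mapP[p _ ->] /mapP[q _]].
  - exact: enum_uniq.
  - by rewrite map_inj_uniq ?stpaths_uniq //; apply: can_inj (lift_pathK _ _).
  - move=> /[dup] /(congr1 path_src) [->] /(congr1 path_snk).
    by rewrite !path_snk_lift => -[->].
move=> P; rewrite inE mem_lifted_paths; apply/idP/orP.
  case/stpath_cases => [->|[i [j [p [Sp ->]]]]]; first by left.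
  by right; apply/existsP; exists (i, j); apply: map_f.
case=> [/eqP ->|/existsP[ij /mapP[p Sp ->]]]; first exact: estar_stpath.
exact: lift_stpath.
Qed.

Lemma big_stpaths (G : seq A' -> R) :
  \sum_(P <- P') G P = G [:: estar] + \sum_(P <- lifted_paths) G P.
Proof. by rewrite (perm_big _ perm_stpaths) big_cons. Qed.

Lemma big_lifted_paths (G : seq A' -> R) :
  \sum_(P <- lifted_paths) G P =
  \sum_(i < k) \sum_(j < k) \sum_(p <- S i j) G (lift_path i j p).
Proof.
rewrite big_flatten big_map big_enum /= pair_big /=.
by apply: eq_bigr => ij _; rewrite big_map.
Qed.

Lemma mem_lift_orig a i j p : (orig a \in lift_path i j p) = (a \in p).
Proof. by rewrite /lift_path inE mem_cat mem_seq1 orbF mem_map // => ? ? []. Qed.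

Lemma mem_lift_sarc i' i j p : (sarc i' \in lift_path i j p) = (i' == i).
Proof.
rewrite /lift_path inE mem_cat mem_seq1.
have -> : (sarc i' \in map orig p) = false by apply/mapP => -[].
by rewrite orbF; apply/eqP/eqP => [[]|->].
Qed.

Lemma mem_lift_tarc j' i j p : (tarc j' \in lift_path i j p) = (j' == j).
Proof.
rewrite /lift_path inE mem_cat mem_seq1.
have -> : (tarc j' \in map orig p) = false by apply/mapP => -[].
by apply/eqP/eqP => [[]|->].
Qed.

Lemma mem_lift_estar i j p : (estar \in lift_path i j p) = false.
Proof.
rewrite /lift_path inE mem_cat mem_seq1.
by have -> : (estar \in map orig p) = false by apply/mapP => -[].
Qed.

Definition lifted_flow (x : seq A' -> R) (i j : 'I_k) : R :=
  \sum_(p <- S i j) x (lift_path i j p).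

Lemma load_sarc (x : seq A' -> R) i :
  \sum_(P <- P' | sarc i \in P) x P = \sum_(j < k) lifted_flow x i j.
Proof.
rewrite big_mkcond big_stpaths big_lifted_paths /= add0r (big_only1 i) // => [|i' ne _].
  by apply: eq_bigr => j _; apply: eq_bigr => p _; rewrite mem_lift_sarc eqxx.
rewrite big1 // => j _; rewrite big1 // => p _.
by rewrite mem_lift_sarc eq_sym (negbTE ne).
Qed.

Lemma load_tarc (x : seq A' -> R) j :
  \sum_(P <- P' | tarc j \in P) x P = \sum_(i < k) lifted_flow x i j.
Proof.
rewrite big_mkcond big_stpaths big_lifted_paths /= add0r; apply: eq_bigr => i _.
rewrite (big_only1 j) // => [|j' ne _].
  by apply: eq_bigr => p _; rewrite mem_lift_tarc eqxx.
by rewrite big1 // => p _; rewrite mem_lift_tarc eq_sym (negbTE ne).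
Qed.

Lemma load_estar (x : seq A' -> R) :
  \sum_(P <- P' | estar \in P) x P = x [:: estar].
Proof.
rewrite big_mkcond big_stpaths big_lifted_paths /= big1 ?addr0 // => i _.
by rewrite big1 // => j _; rewrite big1 // => p _; rewrite mem_lift_estar.
Qed.

Lemma load_orig (x : seq A' -> R) a :
  \sum_(P <- P' | orig a \in P) x P =
  \sum_(i < k) \sum_(j < k) \sum_(p <- S i j | a \in p) x (lift_path i j p).
Proof.
rewrite big_mkcond big_stpaths big_lifted_paths /= add0r.
apply: eq_bigr => i _; apply: eq_bigr => j _; rewrite [RHS]big_mkcond.
by apply: eq_bigr => p _; rewrite mem_lift_orig.
Qed.

(* The cheapest price per unit of flow stolen from [P]. *)
Definition path_weight (P : seq A') : nat :=
  if (path_src P, path_snk P) is (Some i, Some j) then (minn i j).+1 else k.+1.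

Lemma path_weight_lift i j p : path_weight (lift_path i j p) = (minn i j).+1.
Proof. by rewrite /path_weight path_src_lift path_snk_lift. Qed.

Lemma path_weight_le P : (path_weight P <= k.+1)%N.
Proof.
rewrite /path_weight; case: (path_src P) (path_snk P) => [i|] [j|] //.
by rewrite ltnS (leq_trans (geq_minl i j)) // ltnW.
Qed.

Lemma stolen_lift (z : A' -> seq A' -> R) i j p :
  (forall a, z (orig a) (lift_path i j p) = 0) ->
  stolen z (lift_path i j p) =
  z (sarc i) (lift_path i j p) + z (tarc j) (lift_path i j p).
Proof.
move=> z0; rewrite /stolen big_cons big_cat big_map big_seq1.
by rewrite big1 /= ?add0r // => a _.
Qed.

Lemma cost_lift (z : A' -> seq A' -> R) i j p :
  cost z (lift_path i j p) =
  (i.+1)%:R * z (sarc i) (lift_path i j p) +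
  (j.+1)%:R * z (tarc j) (lift_path i j p).
Proof.
rewrite /interdiction_cost big_cons big_cat big_map big_seq1 big1 /= ?add0r //.
by move=> a _; rewrite mul0r.
Qed.

Lemma weighted_stolen_le_cost (z : A' -> seq A' -> R) P : Omega z -> P \in P' ->
  (path_weight P)%:R * stolen z P <= cost z P.
Proof.
case=> z0 [zinf _] /[dup] PP /stpath_cases [->|[i [j [p [Sp P_eq]]]]].
  by rewrite /stolen /interdiction_cost !big_seq1.
rewrite P_eq path_weight_lift stolen_lift ?cost_lift => [|a]; last by rewrite zinf -?P_eq.
by rewrite mulrDr lerD // ler_wpM2r ?z0 -?P_eq // ler_nat ltnS ?geq_minl ?geq_minr.
Qed.

Lemma weighted_lifted_flow (x : seq A' -> R) :
  \sum_(P <- lifted_paths) (path_weight P)%:R * x P =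
  \sum_(i < k) \sum_(j < k) (minn i j).+1%:R * lifted_flow x i j.
Proof.
rewrite big_lifted_paths; apply: eq_bigr => i _; apply: eq_bigr => j _.
by rewrite /lifted_flow mulr_sumr; apply: eq_bigr => p _; rewrite path_weight_lift.
Qed.

Lemma one_le_val (x : seq A' -> R) (z : A' -> seq A' -> R) :
  x [:: estar] = 1 ->
  BIp d <= \sum_(P <- lifted_paths) (path_weight P)%:R * x P ->
  Omega z -> 1 <= Defs.val tl' hd' (sS V) (tT V) x z.
Proof.
move=> x_estar tight zO.
have : stolen z [:: estar] <= \sum_(P <- lifted_paths) Num.max 0 (x P - stolen z P).
  apply: (stolen_le_pos_part (W := (k.+1)%:R) (w := fun P => (path_weight P)%:R)).
  - by [].
  - by move=> P; rewrite ler0n ler_nat path_weight_le.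
  apply: le_trans tight; apply: le_trans (in_Omega_cost zO); rewrite big_stpaths.
  rewrite {1}/stolen {1}/interdiction_cost !big_seq1 lerD2l big_seq [leRHS]big_seq.
  by apply: ler_sum => P /lifted_path_stpath; apply: weighted_stolen_le_cost.
rewrite val_stolen big_stpaths x_estar.
have : 1 - stolen z [:: estar] <= Num.max 0 (1 - stolen z [:: estar]).
  by rewrite le_max lexx orbT.
lra.
Qed.

Section Forward.
Variable f : 'I_k -> seq A -> R.
Hypothesis f_ge0 : forall i p, p \in S i i -> 0 <= f i p.
Hypothesis f_demand : forall i, \sum_(p <- S i i) f i p = d i.
Hypothesis f_cap : forall e, \sum_(i < k) \sum_(p <- S i i | e \in p) f i p <= u e.

Definition mcf_path_flow (P : seq A') : R :=
  if P == [:: estar] then 1 else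
  if (path_src P, path_snk P) is (Some i, Some j) then
    (if i == j then f i (unlift P) else 0)
  else 0.

Local Notation x := mcf_path_flow.

Lemma mcf_path_flow_lift i j p : x (lift_path i j p) = if i == j then f i p else 0.
Proof. by rewrite /x lift_path_neq_estar path_src_lift path_snk_lift lift_pathK. Qed.

Lemma lifted_mcf_path_flow i j : lifted_flow x i j = if i == j then d i else 0.
Proof.
rewrite /lifted_flow; case: eqVneq => [<-|ne]; rewrite -?f_demand.
  by apply: eq_bigr => p _; rewrite mcf_path_flow_lift eqxx.
by rewrite big1 // => p _; rewrite mcf_path_flow_lift (negbTE ne).
Qed.

Lemma mcf_path_flow_ge0 P : P \in P' -> 0 <= x P.
Proof.
case/stpath_cases => [->|[i [j [p [Sp ->]]]]]; first by rewrite /x eqxx.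
by rewrite mcf_path_flow_lift; case: eqVneq Sp => [<-|] //; apply: f_ge0.
Qed.

Lemma mcf_path_flow_feasible :
  feasible_pathflow tl' hd' (sS V) (tT V) (up u d) x.
Proof.
split=> [|[a|[i|[j|[]]]]]; first exact: mcf_path_flow_ge0.
- rewrite load_orig; apply: le_trans (f_cap a); apply: ler_sum => i _.
  rewrite (big_only1 i) // => [|j ne _].
    by apply: ler_sum => p _; rewrite mcf_path_flow_lift eqxx.
  by rewrite big1 // => p _; rewrite mcf_path_flow_lift eq_sym (negbTE ne).
- rewrite load_sarc (big_only1 i) // => [|j ne _]; last first.
    by rewrite lifted_mcf_path_flow eq_sym (negbTE ne).
  by rewrite lifted_mcf_path_flow eqxx.
- rewrite load_tarc (big_only1 j) // => [|i ne _]; last first.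
    by rewrite lifted_mcf_path_flow (negbTE ne).
  by rewrite lifted_mcf_path_flow eqxx.
- by rewrite load_estar /x eqxx.
Qed.

Lemma mcf_weighted_flow :
  \sum_(P <- lifted_paths) (path_weight P)%:R * x P = BIp d.
Proof.
rewrite weighted_lifted_flow; apply: eq_bigr => i _.
rewrite (big_only1 i) // => [|j ne _]; first by rewrite lifted_mcf_path_flow eqxx minnn.
by rewrite lifted_mcf_path_flow eq_sym (negbTE ne) mulr0.
Qed.

Definition source_interdiction (e : A') (P : seq A') : R :=
  if e is inr (inl _) then x P else 0.

Lemma source_interdiction_Omega : Omega source_interdiction.
Proof.
split=> [[a|[i|[j|[]]]] P PP //=|]; first exact: mcf_path_flow_ge0.
split=> [[a|[i|[j|[]]]] //|].
rewrite !big_sumType /= [X in X + _]big1 => [|a _]; last by rewrite mul0r.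
rewrite [X in _ + (_ + (X + _))]big1 => [|j _]; last by rewrite big1 ?mulr0.
rewrite [X in _ + (_ + (_ + X))]big1 => [|[] _]; last by rewrite big1 ?mulr0.
rewrite add0r !addr0.
apply: ler_sum => i _; rewrite ler_wpM2l //.
exact: mcf_path_flow_feasible.2 (sarc i).
Qed.

Lemma val_source_interdiction :
  Defs.val tl' hd' (sS V) (tT V) x source_interdiction = 1.
Proof.
rewrite val_stolen big_stpaths {1}/stolen big_seq1 /x eqxx subr0 (max_r ler01).
rewrite big_lifted_paths big1 ?addr0 // => i _; rewrite big1 // => j _.
by rewrite big1 // => p _; rewrite stolen_lift //= addr0 subrr maxxx.
Qed.

End Forward.

Lemma mcf_robust_flow : mcf_feasible tl hd u src snk d ->
  exists x : seq A' -> R,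
    feasible_pathflow tl' hd' (sS V) (tT V) (up u d) x /\
    min_val_eq tl' hd' (sS V) (tT V) (@cp R A k) (BIp d) x 1.
Proof.
case=> f [f_ge0 [f_demand f_cap]]; exists (mcf_path_flow f).
split; first exact: mcf_path_flow_feasible.
split; first by exists (source_interdiction f); split;
  [apply: source_interdiction_Omega | apply: val_source_interdiction].
move=> z; apply: one_le_val; first by rewrite /mcf_path_flow eqxx.
by rewrite mcf_weighted_flow.
Qed.

Section Backward.
Variable x : seq A' -> R.
Hypothesis x_feasible : feasible_pathflow tl' hd' (sS V) (tT V) (up u d) x.

Lemma lift_flow_ge0 i j p : p \in S i j -> 0 <= x (lift_path i j p).
Proof. by move=> Sp; apply: x_feasible.1; apply: lift_stpath. Qed.

Lemma lifted_flow_ge0 i j : 0 <= lifted_flow x i j.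
Proof. by rewrite /lifted_flow big_seq; apply: sumr_ge0 => p; apply: lift_flow_ge0. Qed.

Lemma lifted_row_le i : \sum_(j < k) lifted_flow x i j <= d i.
Proof. by rewrite -load_sarc; apply: x_feasible.2 (sarc i). Qed.

Lemma lifted_col_le j : \sum_(i < k) lifted_flow x i j <= d j.
Proof. by rewrite -load_tarc; apply: x_feasible.2 (tarc j). Qed.

Lemma weighted_flow_le_budget :
  \sum_(P <- lifted_paths) (path_weight P)%:R * x P <= BIp d.
Proof.
rewrite weighted_lifted_flow; apply: ler_sum => i _.
apply: le_trans (ler_wpM2l _ (lifted_row_le i)) => //.
rewrite mulr_sumr; apply: ler_sum => j _.
by rewrite ler_wpM2r ?lifted_flow_ge0 // ler_nat ltnS geq_minl.
Qed.

Definition budget_slack : R :=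
  BIp d - \sum_(P <- lifted_paths) (path_weight P)%:R * x P.

(* Steal the whole flow of each lifted path at its cheaper end arc and spend
   the leftover budget on e*. *)
Definition cheap_end_interdiction (e : A') (P : seq A') : R :=
  match e with
  | inl _ => 0
  | inr (inl i) =>
      if path_snk P is Some j then (if (i <= j)%N then x P else 0) else 0
  | inr (inr (inl j)) =>
      if path_src P is Some i then (if (j < i)%N then x P else 0) else 0
  | inr (inr (inr _)) => budget_slack / (k.+1)%:R
  end.

Local Notation zc := cheap_end_interdiction.

Lemma stolen_cheap_end i j p : stolen zc (lift_path i j p) = x (lift_path i j p).
Proof.
rewrite stolen_lift //= path_snk_lift.
by case: leqP => _; rewrite ?addr0 ?add0r.
Qed.

Lemma cost_cheap_end i j p :
  cost zc (lift_path i j p) = (minn i j).+1%:R * x (lift_path i j p).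
Proof.
rewrite cost_lift /= path_snk_lift.
by case: leqP => _; rewrite ?mulr0 ?addr0 ?add0r.
Qed.

Lemma cheap_end_interdiction_Omega : Omega zc.
Proof.
have slack_ge0 : 0 <= budget_slack by rewrite subr_ge0 weighted_flow_le_budget.
split=> [[a|[i|[j|[]]]] P PP /=|].
- by [].
- by case: (path_snk P) => [j|] //; case: ifP => // _; apply: x_feasible.1.
- by case: (path_src P) => [i|] //; case: ifP => // _; apply: x_feasible.1.
- by rewrite divr_ge0.
split=> [[a|[i|[j|[]]]] //|].
rewrite budget_by_paths big_stpaths {1}/interdiction_cost big_seq1 /=.
rewrite mulrC divfK ?pnatr_eq0 //.
have -> : \sum_(P <- lifted_paths) cost zc P =
          \sum_(P <- lifted_paths) (path_weight P)%:R * x P.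
  rewrite !big_lifted_paths; apply: eq_bigr => i _; apply: eq_bigr => j _.
  by apply: eq_bigr => p _; rewrite cost_cheap_end path_weight_lift.
by rewrite /budget_slack subrK.
Qed.

Lemma val_cheap_end_interdiction :
  Defs.val tl' hd' (sS V) (tT V) x zc =
  Num.max 0 (x [:: estar] - budget_slack / (k.+1)%:R).
Proof.
rewrite val_stolen big_stpaths {1}/stolen big_seq1 big_lifted_paths big1 ?addr0 //.
move=> i _; rewrite big1 // => j _; rewrite big1 // => p _.
by rewrite stolen_cheap_end subrr maxxx.
Qed.

Lemma budget_tight : min_val_eq tl' hd' (sS V) (tT V) (@cp R A k) (BIp d) x 1 ->
  BIp d <= \sum_(P <- lifted_paths) (path_weight P)%:R * x P.
Proof.
case=> _ /(_ _ cheap_end_interdiction_Omega); rewrite val_cheap_end_interdiction.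
have x_estar : x [:: estar] <= 1 by rewrite -load_estar; apply: x_feasible.2 estar.
rewrite le_max ler10 /= => one_le.
have : budget_slack / (k.+1)%:R <= 0.
  by move: one_le x_estar; set q := budget_slack / _; lra.
by rewrite ler_pdivrMr ?ltr0Sn // mul0r subr_le0.
Qed.

Lemma robust_flow_mcf : min_val_eq tl' hd' (sS V) (tT V) (@cp R A k) (BIp d) x 1 ->
  mcf_feasible tl hd u src snk d.
Proof.
move=> /budget_tight; rewrite weighted_lifted_flow => tight.
have diag := diag_tight lifted_flow_ge0 lifted_row_le lifted_col_le tight.
exists (fun i p => x (lift_path i i p)); split; [|split].
- by move=> i p; apply: lift_flow_ge0.
- exact: diag.
move=> a; apply: le_trans (x_feasible.2 (orig a)); rewrite load_orig.
apply: (sum_diag_le (F := fun i j => \sum_(p <- S i j | a \in p) x (lift_path i j p))).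
move=> i j; rewrite big_seq_cond; apply: sumr_ge0 => p /andP[Sp _].
exact: lift_flow_ge0.
Qed.

End Backward.
End Reduction.

Theorem lemma2 (R : realType) (V A : finType) (tl hd : A -> V) (u : A -> R)
  (hu : forall e, 0 <= u e) (k : nat) (src snk : 'I_k -> V) (d : 'I_k -> R)
  (hd0 : forall i, 0 <= d i) :
  mcf_feasible tl hd u src snk d <->
  exists x : seq (Ap A k) -> R,
    feasible_pathflow (tlp tl snk) (hdp hd src) (sS V) (tT V) (up u d) x /\
    min_val_eq (tlp tl snk) (hdp hd src) (sS V) (tT V)
      (@cp R A k) (BIp d) x 1.
Proof.
split; first exact: mcf_robust_flow.
by case=> x [x_feasible x_min]; apply: robust_flow_mcf x_min.
Qed.
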